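(* Let $n\ge 3$ and let $G$ be a graph on $2n$ vertices with at least $n^2-1$ edges that contains no two distinct vertices of the same degree joined by a path of length three. Let $\beta$ be the largest integer such that $G$ contains two distinct vertices of degree $\beta$. Then $\beta\le n+1$. In particular, if $\beta=n+1$, then $G$ is isomorphic to $K_{n+1,n-1}$.
   Context: A path of length three joining vertices $a$ and $b$ is a path $a\,x\,y\,b$ with four distinct vertices and three edges. Graphs are finite and simple. *)

From mathcomp Require Import all_boot.
Set Implicit Arguments. Unset Strict Implicit. Unset Printing Implicit Defensive.

Definition simple_graph (T : finType) (e : rel T) : Prop :=
  symmetric e /\ irreflexive e.

Definition edges (T : finType) (e : rel T) : {set {set T}} :=
  [set [set x; y] | x in T, y in T & e x y].

Definition deg (T : finType) (e : rel T) (x : T) : nat := #|[set y | e x y]|.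

Definition path3 (T : finType) (e : rel T) (a b : T) : bool :=
  [exists x : T, exists y : T, [&& uniq [:: a; x; y; b], e a x, e x y & e y b]].

Definition graph_iso (T U : finType) (e : rel T) (f : rel U) : Prop :=
  exists g : T -> U, bijective g /\ forall x y, e x y = f (g x) (g y).

Definition Kbip (p q : nat) : rel ('I_p + 'I_q)%type :=
  fun u v => match u, v with
             | inl _, inr _ | inr _, inl _ => true
             | _, _ => false
             end.
Arguments Kbip p q : clear implicits.

(* Let a <> b have degree beta, let A, B be their neighbourhoods (without each
   other when a ~ b), C = A :&: B, and S the vertices outside A :|: B. An edge
   x y with x in A, y in B would give the path a x y b, so the neighbours of a
   vertex of C all lie in S.
   If a ~ b, distinct vertices of C have distinct degrees (x a b y is a path),
   all in [2, |S|]; hence |C| < |S|, which gives 2 beta <= 2n + 1.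
   If a and b are not adjacent and beta > n, then |C| >= |S| + 2. Two vertices of
   C with the same number D of non-neighbours in S have the same degree, so no
   vertex of S adjacent to one of them has an S-neighbour adjacent to the other.
   Choosing D as the least j such that at least j + 2 vertices of C have at most
   j non-neighbours in S, this bounds the edges inside S by the non-edges between
   C and S, strictly unless S is independent. Summing degrees against the edge
   bound n^2 - 1 then forces beta = n + 1, A = B = C, C complete to S and S
   independent: the graph is K_{n+1,n-1}. *)

From mathcomp Require Import all_boot zify.
Set Implicit Arguments. Unset Strict Implicit. Unset Printing Implicit Defensive.

Definition nbhd (T : finType) (e : rel T) (x : T) : {set T} := [set y | e x y].

Lemma in_nbhd (T : finType) (e : rel T) x y : (y \in nbhd e x) = e x y.
Proof. by rewrite inE. Qed.

Lemma card_le_injective_bounded (T : finType) (X : {set T}) (f : T -> nat) k :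
  {in X &, injective f} -> {in X, forall x, f x <= k} -> #|X| <= k.+1.
Proof.
move=> f_inj f_le; pose g x : 'I_k.+1 := inord (f x).
have g_inj : {in X &, injective g}.
  by move=> x y Xx Xy /(congr1 val); rewrite /= !inordK ?ltnS ?f_le //; apply: f_inj.
by rewrite -(card_in_imset g_inj); apply: leq_trans (max_card _) _; rewrite card_ord.
Qed.

Lemma sum_nat_predE (T : finType) (C : {set T}) (P : pred T) :
  \sum_(x in C) (P x : nat) = #|[set x in C | P x]|.
Proof. by rewrite -sum1dep_card big_mkcondr /=; apply: eq_bigr => x _; case: (P x). Qed.

Section LayerCake.

Variables (T : finType) (C : {set T}) (f : T -> nat).

Lemma sum_minn_ge D :
  (forall j, j < D -> #|[set x in C | f x <= j]| <= j.+1) ->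
  2 * (D * #|C|) <= 2 * (\sum_(x in C) minn (f x) D) + D * D.+1.
Proof.
elim: D => [|D IH] cnt_le //.
have {IH} := IH (fun j jD => cnt_le j (ltnW jD)).
have minnS x : minn (f x) D.+1 = minn (f x) D + (D < f x).
  by case: (ltngtP D (f x)) => //; lia.
rewrite (eq_bigr _ (fun x _ => minnS x)) big_split /= sum_nat_predE.
have card_split : #|[set x in C | f x <= D]| + #|[set x in C | D < f x]| = #|C|.
  rewrite -(cardsID [set x | f x <= D] C).
  by congr (_ + _); apply: eq_card => x; rewrite !inE ?ltnNge andbC.
have := cnt_le D (ltnSn D); lia.
Qed.

Lemma repeated_value_sum_ge m :
  {in C, forall x, f x <= m} -> m + 2 <= #|C| ->
  exists x y, [/\ x \in C, y \in C, x != y, f x = f y &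
                  2 * (f x * #|C|) <= 2 * (\sum_(z in C) f z) + f x * (f x).+1].
Proof.
move=> f_le card_C; pose cnt j := #|[set x in C | f x <= j]|.
have cnt_m : cnt m = #|C| by apply: eq_card => x; rewrite inE andb_idr //; apply: f_le.
have [|D cnt_D D_min] := ex_minnP (P := fun j => j + 2 <= cnt j); first by exists m; lia.
have cnt_lt j : j < D -> cnt j <= j.+1.
  by move=> jD; rewrite leqNgt; apply: contraL jD => ?; rewrite -leqNgt D_min // addn2.
have few_below : #|[set x in C | f x < D]| <= D.
  case: D {cnt_D D_min} cnt_lt => [|D] cnt_lt.
    by rewrite leqn0 cards_eq0; apply/eqP/setP => x; rewrite !inE andbF.
  exact: cnt_lt.
have : 1 < #|[set x in C | f x == D]|.
  have cnt_D_split : [set x in C | f x <= D] \subset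
                     [set x in C | f x == D] :|: [set x in C | f x < D].
    by apply/subsetP => x; rewrite !inE -andb_orr -leq_eqVlt.
  have := subset_leq_card cnt_D_split.
  have := cardsUI [set x in C | f x == D] [set x in C | f x < D].
  by move: cnt_D; rewrite /cnt; lia.
move=> /card_gt1P[x [y [/setIdP[xC /eqP fx] /setIdP[yC /eqP fy] xy]]].
exists x, y; split; rewrite ?fx ?fy //.
apply: leq_trans (sum_minn_ge cnt_lt) _; rewrite leq_add2r leq_mul2l.
by apply: leq_sum => z _; rewrite geq_minl.
Qed.

End LayerCake.

Lemma degree_count_arith n s c t M Sd :
  s + c + 2 * t = 2 * n -> n < c + t ->
  2 * (n ^ 2 - 1) + 2 * Sd <= M + 2 * (c * s) + 4 * (t * s) + 2 * (t * t) ->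
  M = 0 \/ M < 2 * Sd -> [/\ c = n.+1, t = 0, M = 0 & Sd = 0].
Proof.
move=> card_sum big_ct.
have [k [-> ->]] : exists k, n = s + k.+1 + t /\ c = s + k.+1.*2.
  by exists (c + t - n).-1; lia.
move=> count; have {count} : 2 * (k * k) + 4 * k + 4 * (k * t) + 4 * t + 2 * Sd <= M.
  by move: count; rewrite -!mul2n; nia.
by rewrite -mul2n => bound [M0 | M_lt]; [split | exfalso]; lia.
Qed.

Lemma graph_iso_Kbip (T : finType) (e : rel T) (C : {set T}) :
  (forall x y, e x y = (x \in C) (+) (y \in C)) -> graph_iso e (Kbip #|C| #|~: C|).
Proof.
move=> eE.
pose h (u : ('I_#|C| + 'I_#|~: C|)%type) : T :=
  match u with inl i => enum_val i | inr j => enum_val j end.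
have h_in u : (h u \in C) = is_inl u.
  by case: u => [i|j] /=; [apply: enum_valP | apply/negbTE; rewrite -in_setC; apply: enum_valP].
have h_inj : injective h.
  case=> [i|j] [i'|j'] hE.
  - by congr inl; apply: enum_val_inj.
  - by have := h_in (inl i); rewrite hE h_in.
  - by have := h_in (inr j); rewrite hE h_in.
  - by congr inr; apply: enum_val_inj.
have [g hK gK] : bijective h.
  by apply: (inj_card_bij h_inj); rewrite card_sum !card_ord cardsC.
exists g; split; first by exists h.
by move=> x y; rewrite -{1}(gK x) -{1}(gK y) eE !h_in; case: (g x); case: (g y).
Qed.

Section Counting.

Variables (T : finType) (e : rel T).

Lemma card_nbhdI (X : {set T}) v : #|nbhd e v :&: X| = \sum_(w in X) e v w.
Proof. by rewrite sum_nat_predE; apply: eq_card => w; rewrite !inE andbC. Qed.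

Hypothesis e_sym : symmetric e.

Lemma sum_card_nbhdI_sym (X Y : {set T}) :
  \sum_(v in X) #|nbhd e v :&: Y| = \sum_(w in Y) #|nbhd e w :&: X|.
Proof.
under eq_bigr do rewrite card_nbhdI.
under [RHS]eq_bigr do rewrite card_nbhdI.
by rewrite exchange_big; apply: eq_bigr => w _; apply: eq_bigr => v _; rewrite e_sym.
Qed.

Lemma sum_deg_split (W : {set T}) :
  \sum_x deg e x = \sum_(u in ~: W) #|nbhd e u :&: ~: W|
                   + 2 * \sum_(v in W) #|nbhd e v :&: ~: W|
                   + \sum_(v in W) #|nbhd e v :&: W|.
Proof.
have deg_split v : deg e v = #|nbhd e v :&: ~: W| + #|nbhd e v :&: W|.
  by rewrite /deg -(cardsID (~: W) (nbhd e v)) setDE setCK.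
rewrite (bigID (mem W)) /= addnC (eq_bigl (mem (~: W))) => [|x]; last by rewrite !inE.
under eq_bigr do rewrite deg_split.
under [X in _ + X]eq_bigr do rewrite deg_split.
by rewrite !big_split /= (sum_card_nbhdI_sym (~: W) W); lia.
Qed.

Hypothesis e_irr : irreflexive e.

Lemma double_card_edges_le : 2 * #|edges e| <= \sum_x deg e x.
Proof.
have -> : \sum_x deg e x = \sum_(p : T * T | e p.1 p.2) 1.
  have deg_sum x : deg e x = \sum_(y in [set: T]) e x y.
    by rewrite -card_nbhdI setIT.
  under eq_bigr do rewrite deg_sum.
  rewrite pair_big /= [RHS]big_mkcond /=.
  by apply: eq_big => [p|p _]; rewrite ?inE //; case: (e p.1 p.2).
rewrite (partition_big (fun p : T * T => [set p.1; p.2]) (mem (edges e))) /=; last first.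
  by move=> [x y] /= exy; apply/imset2P; exists x y; rewrite ?inE.
rewrite mulnC -sum_nat_const; apply: leq_sum => E /imset2P[x y _]; rewrite inE => /andP[_ exy] ->.
have <- : #|[set (x, y); (y, x)]| = 2.
  by rewrite cards2; case: eqP => // -[xy _]; move: exy; rewrite xy e_irr.
rewrite sum1dep_card; apply/subset_leq_card/subsetP => p; rewrite !inE.
case/orP => /eqP -> /=; rewrite ?(e_sym y) exy //=.
by rewrite setUC.
Qed.

End Counting.

Section EqualDegreePath3Free.

Variables (T : finType) (e : rel T).
Hypotheses (e_sym : symmetric e) (e_irr : irreflexive e).

Lemma edge_neq x y : e x y -> x != y.
Proof. by apply: contraTneq => ->; rewrite e_irr. Qed.

Lemma path3_of_edges a x y b :
  a != b -> a != y -> x != b -> e a x -> e x y -> e y b -> path3 e a b.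
Proof.
move=> ab ay xb ax xy yb; apply/existsP; exists x; apply/existsP; exists y.
by rewrite /= !(inE, in_nbhd) !negb_or ab ay xb (edge_neq ax) (edge_neq xy) (edge_neq yb) ax xy yb.
Qed.

Lemma path3C a b : path3 e a b -> path3 e b a.
Proof.
case/existsP => x /existsP[y /and4P[abxy ax xy yb]].
apply/existsP; exists y; apply/existsP; exists x.
rewrite (e_sym b y) (e_sym y x) (e_sym x a) yb xy ax !andbT.
by rewrite -rev_uniq in abxy.
Qed.

Section InnerEdges.

Variable S : {set T}.

Lemma inner_nbhd_sub x y u : x != y -> x \notin S -> y \notin S ->
  ~~ path3 e x y -> u \in S -> e x u -> nbhd e u :&: S \subset S :\: nbhd e y.
Proof.
move=> xy xS yS no_xy uS xu; apply/subsetP => z; rewrite !(inE, in_nbhd) => /andP[uz zS].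
rewrite zS andbT; apply: contra no_xy => yz.
apply: (path3_of_edges xy _ _ xu uz); rewrite 1?e_sym //.
- by apply: contraNneq xS => ->.
- by apply: contraNneq yS => <-.
Qed.

Lemma sum_inner_deg_le x y D : x != y -> x \notin S -> y \notin S -> ~~ path3 e x y ->
  #|S :\: nbhd e x| = D -> #|S :\: nbhd e y| = D ->
  \sum_(u in S) #|nbhd e u :&: S| + D * D <= 2 * (D * #|S|).
Proof.
move=> xy xS yS no_xy dx dy; set Dl := S :\: (nbhd e x :|: nbhd e y).
have deg_le u : u \in S -> #|nbhd e u :&: S| <= if u \in Dl then #|S| else D.
  move=> uS; case: ifPn => [_|]; first exact/subset_leq_card/subsetIr.
  rewrite !(inE, in_nbhd) uS andbT negbK => /orP[xu|yu].
    by rewrite -dy; apply/subset_leq_card/(inner_nbhd_sub xy).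
  rewrite -dx; apply/subset_leq_card/(inner_nbhd_sub _ yS xS) => //.
    by rewrite eq_sym.
  by apply: contra no_xy; apply: path3C.
have DlS : Dl \subset S by apply: subsetDl.
have split_sum : \sum_(u in S) (if u \in Dl then #|S| else D) = #|Dl| * #|S| + #|S :\: Dl| * D.
  rewrite (bigID (mem Dl)) /= -!sum_nat_const; congr (_ + _).
    by apply: eq_big => [u|u /andP[_ ->]] //; rewrite andb_idl // => /(subsetP DlS).
  by apply: eq_big => [u|u /andP[_ /negPf ->]] //; rewrite !inE andbC.
have card_Dl : #|Dl| <= D.
  by rewrite -dx; apply/subset_leq_card/setDS/subsetUl.
have D_le : D <= #|S| by rewrite -dx; apply/subset_leq_card/subsetDl.
have card_S : #|Dl| + #|S :\: Dl| = #|S| by rewrite -(cardsID Dl S) (setIidPr DlS).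
suff : \sum_(u in S) #|nbhd e u :&: S| <= \sum_(u in S) (if u \in Dl then #|S| else D).
  by rewrite split_sum; nia.
exact: leq_sum.
Qed.

Lemma sum_inner_deg_eq0_or_lt (C : {set T}) :
  {in C, forall x, x \notin S} -> #|S| + 2 <= #|C| ->
  {in C &, forall x y, x != y -> #|S :\: nbhd e x| = #|S :\: nbhd e y| -> ~~ path3 e x y} ->
  \sum_(u in S) #|nbhd e u :&: S| = 0 \/
  \sum_(u in S) #|nbhd e u :&: S| < 2 * \sum_(x in C) #|S :\: nbhd e x|.
Proof.
move=> CS card_C no_path3.
(* With M, Sd the two sums and D the common count at x and y:
   2 Sd >= 2 D |C| - D (D + 1) > 2 D |S| - D^2 >= M unless D = 0. *)
have [|x [y [xC yC xy dxy]]] := repeated_value_sum_ge (f := fun x => #|S :\: nbhd e x|) _ card_C.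
  by move=> x _; apply/subset_leq_card/subsetDl.
have := sum_inner_deg_le xy (CS x xC) (CS y yC) (no_path3 x y xC yC xy dxy) erefl (esym dxy).
case: (posnP #|S :\: nbhd e x|) => [-> | D_gt0]; first by rewrite mul0n leqn0 addn0 => /eqP; left.
by right; nia.
Qed.

End InnerEdges.

Hypothesis no_path3 : forall a b, a != b -> deg e a = deg e b -> ~~ path3 e a b.

Lemma nbhds_nonadjacent a b x y : a != b -> deg e a = deg e b ->
  e a x -> e b y -> x != b -> y != a -> ~~ e x y.
Proof.
move=> ab dab ax bx xb ya; apply: contra (no_path3 ab dab) => xy.
by apply: (path3_of_edges ab _ xb ax xy); rewrite 1?eq_sym // e_sym.
Qed.

Lemma adjacent_equal_deg_le a b : a != b -> e a b -> deg e a = deg e b ->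
  2 * deg e a <= #|T|.+1.
Proof.
move=> ab eab dab.
set A := nbhd e a :\ b; set B := nbhd e b :\ a; set C := A :&: B; set S := ~: (A :|: B).
have AB_nonadj x y : x \in A -> y \in B -> ~~ e x y.
  rewrite !(inE, in_nbhd) => /andP[xb ax] /andP[ya by_].
  exact: nbhds_nonadjacent ab dab ax by_ xb ya.
have nbhd_C x : x \in C -> nbhd e x \subset S.
  move=> /setIP[xA xB]; apply/subsetP => w; rewrite in_nbhd in_setC in_setU negb_or => xw.
  apply/andP; split; apply: contraL xw => wX; last exact: AB_nonadj.
  by rewrite e_sym; apply: AB_nonadj.
have abC x : x \in C -> [set a; b] \subset nbhd e x.
  rewrite !(inE, in_nbhd) => /andP[/andP[_ ax] /andP[_ bx]].
  by apply/subsetP => z; rewrite !(inE, in_nbhd) => /orP[] /eqP ->; rewrite e_sym.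
have card_ab : #|[set a; b]| = 2 by rewrite cards2 ab.
have deg_C x : x \in C -> 2 <= deg e x <= #|S|.
  move=> xC; rewrite -card_ab (subset_leq_card (abC x xC)).
  exact: subset_leq_card (nbhd_C x xC).
have card_C_lt : #|C| <= (#|S| - 2).+1.
  apply: (card_le_injective_bounded (f := fun x => deg e x - 2)); last first.
    by move=> x /deg_C; lia.
  move=> x y xC yC dxy; apply/eqP/contraT => xy.
  have {}dxy : deg e x = deg e y by move: (deg_C x xC) (deg_C y yC); lia.
  case/negP: (no_path3 xy dxy).
  move: xC yC; rewrite !(inE, in_nbhd) => /andP[/andP[xb ax] _] /andP[_ /andP[ya by_]].
  by apply: (path3_of_edges xy xb _ _ eab by_); rewrite 1?eq_sym // e_sym.
have card_A : #|A| + 1 = deg e a by rewrite [RHS](cardsD1 b (nbhd e a)) in_nbhd eab addnC.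
have card_B : #|B| + 1 = deg e a by rewrite dab [RHS](cardsD1 a (nbhd e b)) in_nbhd e_sym eab addnC.
have abS : [set a; b] \subset S.
  by apply/subsetP => z; rewrite !inE => /orP[] /eqP ->; rewrite !e_irr eqxx !andbF.
have := subset_leq_card abS; have := cardsUI A B; have := cardsC (A :|: B).
rewrite -/S -/C card_ab; lia.
Qed.

Section Nonadjacent.

Variables a b : T.
Hypotheses (ab : a != b) (nab : ~~ e a b) (dab : deg e a = deg e b).

Local Notation A := (nbhd e a).
Local Notation B := (nbhd e b).
Local Notation C := (A :&: B).
Local Notation W := (A :|: B).
Local Notation S := (~: W).

Lemma AB_nonadjacent x y : x \in A -> y \in B -> ~~ e x y.
Proof.
rewrite !in_nbhd => ax by_; apply: (nbhds_nonadjacent ab dab ax by_).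
  by apply: contraNneq nab => <-.
by apply: contraNneq nab => <-; rewrite e_sym.
Qed.

Lemma common_nbhd_sub x : x \in C -> nbhd e x \subset S.
Proof.
case/setIP => xA xB; apply/subsetP => z; rewrite in_nbhd in_setC in_setU => xz.
apply/norP; split; apply: contraL xz => zX; last exact: AB_nonadjacent.
by rewrite e_sym; apply: AB_nonadjacent.
Qed.

Lemma common_notin_outside x : x \in C -> x \notin S.
Proof. by rewrite in_setC negbK => /setIP[xA _]; rewrite in_setU xA. Qed.

Lemma deg_common x : x \in C -> deg e x + #|S :\: nbhd e x| = #|S|.
Proof.
by move=> xC; rewrite -(cardsID (nbhd e x) S) (setIidPr (common_nbhd_sub xC)).
Qed.

Lemma card_private : #|A :\: B| = #|B :\: A|.
Proof.
by have := cardsID B A; have := cardsID A B; rewrite setIC -/(deg e a) -/(deg e b) dab; lia.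
Qed.

Lemma private_nbhd_card x : x \in W :\: C -> #|nbhd e x :&: W| <= #|A :\: B|.
Proof.
case/setDP; rewrite in_setI in_setU => /orP[xA | xB] xC.
  apply/subset_leq_card/subsetP => z /setIP[]; rewrite in_nbhd => xz zW.
  have zB : z \notin B by apply: contraL xz => zB; apply: AB_nonadjacent xA zB.
  by move: zW; rewrite in_setD in_setU (negbTE zB) orbF.
rewrite card_private; apply/subset_leq_card/subsetP => z /setIP[]; rewrite in_nbhd => xz zW.
have zA : z \notin A by apply: contraL xz => zA; rewrite e_sym; apply: AB_nonadjacent zA xB.
by move: zW; rewrite in_setD in_setU (negbTE zA).
Qed.

Lemma sum_deg_nonadjacent_le :
  \sum_x deg e x + 2 * \sum_(x in C) #|S :\: nbhd e x| <=
  \sum_(u in S) #|nbhd e u :&: S| + 2 * (#|C| * #|S|) + 4 * (#|A :\: B| * #|S|)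
  + 2 * (#|A :\: B| * #|A :\: B|).
Proof.
set t := #|A :\: B|.
have CW : C \subset W by apply: subset_trans (subsetIl A B) (subsetUl A B).
have card_WC : #|W :\: C| = 2 * t.
  have : #|A| = #|B| := dab.
  by have := cardsID C W; have := cardsUI A B; have := cardsID B A; rewrite (setIidPr CW); lia.
have sum_WS : \sum_(v in W) #|nbhd e v :&: S| + \sum_(x in C) #|S :\: nbhd e x|
              <= #|C| * #|S| + 2 * t * #|S|.
  rewrite (big_setID C) /= (setIidPr CW) addnAC -big_split /= -card_WC -!sum_nat_const.
  apply: leq_add; first by rewrite eq_leq //; apply: eq_bigr => v _; rewrite setIC cardsID.
  by apply: leq_sum => v _; apply/subset_leq_card/subsetIr.
have sum_WW : \sum_(v in W) #|nbhd e v :&: W| <= 2 * t * t.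
  rewrite (big_setID C) /= (setIidPr CW) big1 => [|v vC]; last first.
    by apply/eqP; rewrite cards_eq0 setI_eq0 disjoints_subset; apply: common_nbhd_sub.
  by rewrite add0n -card_WC -sum_nat_const; apply: leq_sum => v; apply: private_nbhd_card.
rewrite (sum_deg_split e_sym W); lia.
Qed.

Lemma nonadjacent_bipartite :
  #|A :\: B| = 0 -> \sum_(x in C) #|S :\: nbhd e x| = 0 ->
  \sum_(u in S) #|nbhd e u :&: S| = 0 ->
  forall x y, e x y = (x \in C) (+) (y \in C).
Proof.
move=> /eqP; rewrite cards_eq0 setD_eq0 => sAB.
have /eqP : #|B :\: A| = 0 by rewrite -card_private; apply/eqP; rewrite cards_eq0 setD_eq0.
rewrite cards_eq0 setD_eq0 => sBA.
have S_C x : (x \in S) = (x \notin C).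
  have AB : A = B by apply/eqP; rewrite eqEsubset sAB sBA.
  by rewrite in_setC AB setUid setIid.
move=> /eqP; rewrite sum_nat_eq0 => /forall_inP C_S_full.
move=> /eqP; rewrite sum_nat_eq0 => /forall_inP S_indep.
have C_S_edge x y : x \in C -> y \notin C -> e x y.
  move=> /C_S_full; rewrite cards_eq0 => /eqP/setP/(_ y).
  by rewrite in_setD in_set0 in_nbhd S_C => + yC; rewrite yC andbT => /negbFE.
move=> x y; case: (boolP (x \in C)) => xC; case: (boolP (y \in C)) => yC /=.
- apply: contraNF (common_notin_outside yC); rewrite -in_nbhd; apply/subsetP.
  exact: common_nbhd_sub.
- exact: C_S_edge.
- by rewrite e_sym; apply: C_S_edge.
- have /S_indep : x \in S by rewrite S_C.
  rewrite cards_eq0 => /eqP/setP/(_ y).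
  by rewrite in_setI in_set0 in_nbhd S_C yC andbT.
Qed.

Lemma nonadjacent_equal_deg_gt n : #|T| = 2 * n ->
  2 * (n ^ 2 - 1) <= \sum_x deg e x -> n < deg e a ->
  deg e a = n.+1 /\ graph_iso e (Kbip (n + 1) (n - 1)).
Proof.
move=> card_T sum_deg deg_gt.
have deg_a : deg e a = #|C| + #|A :\: B| := esym (cardsID B A).
have card_T_split : #|S| + #|C| + 2 * #|A :\: B| = 2 * n.
  have : #|A| = #|B| := dab.
  by have := cardsC W; have := cardsUI A B; have := cardsID B A; lia.
have card_SC : #|S| + 2 <= #|C| by lia.
have equal_nonnbhd_no_path3 : {in C &, forall x y, x != y ->
    #|S :\: nbhd e x| = #|S :\: nbhd e y| -> ~~ path3 e x y}.
  move=> x y xC yC xy dxy; apply: no_path3 xy _.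
  by have := deg_common xC; have := deg_common yC; lia.
have inner := sum_inner_deg_eq0_or_lt common_notin_outside card_SC equal_nonnbhd_no_path3.
have count := leq_trans (leq_add sum_deg (leqnn _)) sum_deg_nonadjacent_le.
rewrite deg_a in deg_gt.
have [card_C t0 M0 Sd0] := degree_count_arith card_T_split deg_gt count inner.
split; first by lia.
have card_CC : #|~: C| = n - 1 by have := cardsC C; lia.
by rewrite addn1 -card_C -card_CC; apply/graph_iso_Kbip/nonadjacent_bipartite.
Qed.

End Nonadjacent.

End EqualDegreePath3Free.

Theorem lemma3p1 (n : nat) (T : finType) (e : rel T) (beta : nat) :
  3 <= n ->
  simple_graph e ->
  #|T| = 2 * n ->
  n ^ 2 - 1 <= #|edges e| ->
  (forall a b : T, a != b -> deg e a = deg e b -> ~~ path3 e a b) ->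
  (exists a b : T, [/\ a != b, deg e a = beta & deg e b = beta]) ->
  (forall a b : T, a != b -> deg e a = deg e b -> deg e a <= beta) ->
  beta <= n + 1 /\ (beta = n + 1 -> graph_iso e (Kbip (n + 1) (n - 1))).
Proof.
move=> _ [e_sym e_irr] card_T card_E no_path3 [a [b [ab <- db]]] _.
have dab : deg e a = deg e b by rewrite db.
have sum_deg : 2 * (n ^ 2 - 1) <= \sum_x deg e x.
  by apply: leq_trans (double_card_edges_le e_sym e_irr); rewrite leq_mul2l card_E orbT.
case: (boolP (e a b)) => [eab | nab].
  have := adjacent_equal_deg_le e_sym e_irr no_path3 ab eab dab.
  by rewrite card_T => deg_le; split=> [|deg_eq]; lia.
have [deg_le | deg_gt] := leqP (deg e a) n; first by split=> [|deg_eq]; lia.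
have [deg_eq iso] := nonadjacent_equal_deg_gt e_sym e_irr no_path3 ab nab dab card_T sum_deg deg_gt.
by split=> [|//]; lia.
Qed.
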